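(* Let $N=(P,T,F,I,O)$ be a pWF net such that no output place has an outgoing edge, i.e. $p\bullet=\emptyset$ for all $p\in O$. Then $N$ is $*$-sound if and only if $N$ is sub-sound.
   Context: Petri nets and markings. A Petri net is a triple $(P,T,F)$ with $P$ a finite set of places, $T$ a finite set of transitions, $P\cap T=\emptyset$, and $F\subseteq (P\times T)\cup(T\times P)$. For a node $x$, $\bullet x=\{y\mid (y,x)\in F\}$, $x\bullet=\{y\mid (x,y)\in F\}$. A marking is a multiset over $P$ (a function $P\to\mathbb N$); sets of places are identified with bags of multiplicity one, $+,-,\le$ are pointwise, and $k.m$ is the sum of $k$ copies of $m$. Transition $t$ is enabled at $m$ iff $\bullet t\le m$, firing gives $m-\bullet t+t\bullet$, and $m\xrightarrow{*}m'$ denotes reachability by a finite (possibly empty) firing sequence. A pWF net is $(P,T,F,I,O)$ with $(P,T,F)$ a Petri net, $I,O\subseteq P$ non-empty, every node reachable by a directed path from some node of $I$, and some node of $O$ reachable from every node. Soundness. A pWF net is $k$-sound if for every marking $m$ with $k.I\xrightarrow{*}m$ we have $m\xrightarrow{*}k.O$; $*$-sound if $k$-sound for all $k\ge1$. It is substitution-sound (sub-sound) if for all integers $k\ge k'\ge 0$ and every marking $m'$: if $k.I\xrightarrow{*}m'+k'.O$ then $m'\xrightarrow{*}(k-k').O$. *)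

From mathcomp Require Import all_boot.
Set Implicit Arguments. Unset Strict Implicit. Unset Printing Implicit Defensive.

(* A Petri net (P,T,F): places and transitions are finite types (so P and T
   are automatically disjoint as nodes of the sum type P + T); the flow
   relation F is split into F ∩ (P×T) (= pre) and F ∩ (T×P) (= post). *)
Record petri_net := PetriNet {
  place : finType;
  trans : finType;
  pre  : place -> trans -> bool;
  post : trans -> place -> bool
}.

Section Net.
Variable N : petri_net.
Local Notation P := (place N).
Local Notation T := (trans N).

Definition node := (P + T)%type.
Definition flow : rel node := fun x y =>
  match x, y with
  | inl p, inr t => pre p t
  | inr t, inl p => post t p
  | _, _ => false
  end.

Definition marking := {ffun P -> nat}.
Definition madd (m m' : marking) : marking := [ffun p => m p + m' p].
Definition msub (m m' : marking) : marking := [ffun p => m p - m' p].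
Definition mle (m m' : marking) : bool := [forall p, m p <= m' p].
Definition mscale (k : nat) (m : marking) : marking := [ffun p => k * m p].
Definition bag_of (A : {set P}) : marking := [ffun p => nat_of_bool (p \in A)].
Definition preset (t : T) : marking := [ffun p => nat_of_bool (pre p t)].
Definition postset (t : T) : marking := [ffun p => nat_of_bool (post t p)].

Definition enabled (m : marking) (t : T) : bool := mle (preset t) m.
Definition fire_step (m m' : marking) : Prop :=
  exists t, enabled m t /\ m' = madd (msub m (preset t)) (postset t).

Inductive reach : marking -> marking -> Prop :=
  | reach_refl m : reach m m
  | reach_step m m' m'' : fire_step m m' -> reach m' m'' -> reach m m''.

Definition is_pWF (I O : {set P}) : Prop :=
  I != set0 /\ O != set0 /\
  (forall x : node, exists2 i, i \in I & connect flow (inl i) x) /\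
  (forall x : node, exists2 o, o \in O & connect flow x (inl o)).

Definition k_sound (I O : {set P}) (k : nat) : Prop :=
  forall m, reach (mscale k (bag_of I)) m -> reach m (mscale k (bag_of O)).

Definition star_sound (I O : {set P}) : Prop :=
  forall k, 1 <= k -> k_sound I O k.

Definition sub_sound (I O : {set P}) : Prop :=
  forall (k k' : nat) (m' : marking), k' <= k ->
    reach (mscale k (bag_of I)) (madd m' (mscale k' (bag_of O))) ->
    reach m' (mscale (k - k') (bag_of O)).

End Net.

From mathcomp Require Import all_boot.
From mathcomp Require Import zify.

Set Implicit Arguments.
Unset Strict Implicit.
Unset Printing Implicit Defensive.

(* Sub-soundness implies *-soundness for every net: take k' = 0.
   For the converse, the key fact is a "frame" lemma: tokens lying on places
   that no transition consumes are inert, so a run from m + z (with such a z)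
   is a run from m with z carried along unchanged.  Writing k.O as
   (k - k').O + k'.O, a run from k.I through m' + k'.O to k.O (given by
   k-soundness) thus strips to a run from m' to (k - k').O.  The case k = 0 is
   not covered by *-soundness; there the pWF condition gives every transition
   an input place, so the empty marking is dead and m' must be empty. *)

Section Markings.
Variable N : petri_net.

Definition mzero : marking N := [ffun=> 0].

Lemma mscale0 (m : marking N) : mscale 0 m = mzero.
Proof. by apply/ffunP => p; rewrite !ffunE. Qed.

Lemma madd_m0 (m : marking N) : madd m mzero = m.
Proof. by apply/ffunP => p; rewrite !ffunE addn0. Qed.

Lemma maddIr (y y' z : marking N) : madd y z = madd y' z -> y = y'.
Proof.
move/ffunP => e; apply/ffunP => p.
by move: (e p); rewrite !ffunE => /addIn.
Qed.

Lemma mscale_split (k k' : nat) (m : marking N) : k' <= k ->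
  mscale k m = madd (mscale (k - k') m) (mscale k' m).
Proof. by move=> le_k'k; apply/ffunP => p; rewrite !ffunE -mulnDl subnK. Qed.

End Markings.

Section Runs.
Variable N : petri_net.

Definition inert (z : marking N) : Prop :=
  forall p t, pre p t -> z p = 0.

Lemma reach_strip_inert (z : marking N) : inert z ->
  forall a x, reach a x -> forall m, a = madd m z ->
  exists2 y, x = madd y z & reach m y.
Proof.
move=> z_inert a x; elim=> [a0 | a0 a1 x0 [t [en_t ->]] _ IH] m a0E.
  by exists m => //; apply: reach_refl.
have pre_le_m p : preset t p <= m p.
  move/forallP: en_t => /(_ p); rewrite a0E !ffunE.
  by case: (boolP (pre p t)) => [/z_inert -> | _] /=; lia.
have fire_frame : madd (msub a0 (preset t)) (postset t)
                = madd (madd (msub m (preset t)) (postset t)) z.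
  by apply/ffunP => p; move: (pre_le_m p); rewrite a0E !ffunE; lia.
have [y -> m'_y] := IH _ fire_frame.
exists y => //; apply: reach_step m'_y; exists t; split => //.
by apply/forallP => p; apply: pre_le_m.
Qed.

Lemma reach_dead (m x : marking N) :
  (forall t, ~~ enabled m t) -> reach m x -> x = m.
Proof.
move=> dead run; case: run dead => [// | m0 m' x0 [t [en_t _]] _ dead].
by move: (dead t); rewrite en_t.
Qed.

(* In a pWF net every transition has an input place: it is reachable by a
   flow path from I, and the last arc of that path ends in it. *)
Lemma pWF_has_input (I O : {set place N}) :
  is_pWF I O -> forall t : trans N, exists p, pre p t.
Proof.
move=> [_ [_ [from_I _]]] t; have [i _ /connectP [s]] := from_I (inr t).
case/lastP: s => [// | s x]; rewrite rcons_path last_rcons => /andP[_].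
move=> + x_t; rewrite -x_t; case: (last (inl i) s) => [p | t'] //= pre_pt.
by exists p.
Qed.

Lemma pWF_reach_mzero (I O : {set place N}) (m : marking N) :
  is_pWF I O -> reach (mzero N) m -> m = mzero N.
Proof.
move=> pWF; apply: reach_dead => t; have [p pre_pt] := pWF_has_input pWF t.
by apply/forallP => /(_ p); rewrite !ffunE pre_pt.
Qed.

End Runs.

Section Soundness.
Variables (N : petri_net) (I O : {set place N}).

Lemma sub_sound_star_sound : sub_sound I O -> star_sound I O.
Proof.
move=> sub k _ m run_m.
by have := sub k 0 m (leq0n k); rewrite subn0 mscale0 madd_m0; apply.
Qed.

Lemma star_sound_sub_sound : is_pWF I O ->
  (forall (p : place N) (t : trans N), p \in O -> ~~ pre p t) ->
  star_sound I O -> sub_sound I O.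
Proof.
move=> pWF O_unconsumed star k k' m' le_k'k run_m'.
case: k le_k'k run_m' => [|k] le_k'k run_m'.
  have k'0 : k' = 0 by lia.
  move: run_m'; rewrite k'0 !mscale0 madd_m0 => /(pWF_reach_mzero pWF) ->.
  exact: reach_refl.
have O_inert : inert (mscale k' (bag_of O)).
  move=> p t pre_pt; rewrite !ffunE.
  case: (boolP (p \in O)) => [p_O | _]; last by rewrite muln0.
  by move: (O_unconsumed p t p_O); rewrite pre_pt.
have run_end := star k.+1 isT _ run_m'.
rewrite (mscale_split _ le_k'k) in run_end.
by have [y /maddIr ->] := reach_strip_inert O_inert run_end erefl.
Qed.

End Soundness.

Theorem mainTheorem6 (N : petri_net) (I O : {set place N}) :
  is_pWF I O ->
  (forall (p : place N) (t : trans N), p \in O -> ~~ pre p t) ->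
  (star_sound I O <-> sub_sound I O).
Proof.
move=> pWF O_unconsumed; split.
- exact: star_sound_sub_sound.
- exact: sub_sound_star_sound.
Qed.
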